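(* Let $\Bbbk$ be an algebraically closed field of characteristic zero and let $\mathcal{V}$ be the Virasoro algebra over $\Bbbk$. Let $M$ be a simple weight $\mathcal{V}$-module and let $\mu\in\Bbbk$ be such that $\dim M_\mu<\infty$ and $\dim M_{\mu+i}=\infty$ for every $i\in\mathbb{Z}\setminus\{0\}$. Let $0\neq v\in M_{\mu-1}$ be such that $e_1v=0$. Then $(e_1^3-6e_2e_1+6e_3)e_2v=0$.
   Context: The Virasoro algebra $\mathcal{V}$ over $\Bbbk$ has basis consisting of a central element $c$ and elements $e_i$, $i\in\mathbb{Z}$, with bracket $[e_i,e_j]=(j-i)e_{i+j}+\delta_{i,-j}\frac{i^3-i}{12}c$. A weight $\mathcal{V}$-module is a module on which $e_0$ and $c$ act diagonalizably; $M_\lambda=\{m\in M: e_0m=\lambda m\}$. *)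

From HB Require Import structures.
From mathcomp Require Import all_boot all_order all_algebra.
Set Implicit Arguments. Unset Strict Implicit. Unset Printing Implicit Defensive.
Import Order.TTheory GRing.Theory Num.Theory.
Local Open Scope ring_scope.

Section Vir.
Variables (k : fieldType) (M : lmodType k).

(* Virasoro module structure: e i is the action of e_i, c the action of the
   central element c.  The bracket [x,y] acts as the commutator xy - yx. *)
Definition vir_module (e : int -> M -> M) (c : M -> M) : Prop :=
  [/\ (forall i, linear (e i)), linear c,
      (forall i m, c (e i m) = e i (c m)) &
      (forall (i j : int) m,
          e i (e j m) - e j (e i m) =
          (j - i)%:~R *: e (i + j) m +
          (if i == - j then ((i ^+ 3 - i)%:~R / 12%:R) *: c m else 0))].

Definition diagonalizable (f : M -> M) : Prop :=
  forall m : M, exists s : seq (k * M),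
    (forall p, p \in s -> f p.2 = p.1 *: p.2) /\ m = \sum_(p <- s) p.2.

Definition weight_module (e : int -> M -> M) (c : M -> M) : Prop :=
  vir_module e c /\ diagonalizable (e 0) /\ diagonalizable c.

Definition weight_space (e : int -> M -> M) (lam : k) : M -> Prop :=
  fun m => e 0 m = lam *: m.

Definition fin_dim (P : M -> Prop) : Prop :=
  exists (n : nat) (b : 'I_n -> M), (forall i, P (b i)) /\
    forall m, P m -> exists a : 'I_n -> k, m = \sum_(i < n) a i *: b i.

Definition submodule (e : int -> M -> M) (c : M -> M) (P : M -> Prop) : Prop :=
  [/\ P 0, (forall x y, P x -> P y -> P (x + y)),
      (forall (a : k) x, P x -> P (a *: x)),
      (forall i x, P x -> P (e i x)) & (forall x, P x -> P (c x))].

Definition simple_module (e : int -> M -> M) (c : M -> M) : Prop :=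
  (exists m : M, m != 0) /\
  forall P, submodule e c P -> (forall m, P m -> m = 0) \/ (forall m, P m).

End Vir.

(* Using e_1 v = 0 and moving e_1 to the right gives e_1 e_2 v = e_3 v,
   e_1 e_3 v = 2 e_4 v and e_1 e_4 v = 3 e_5 v, so e_1^3 e_2 v = 6 e_5 v
   and e_2 e_1 e_2 v = e_2 e_3 v; finally e_3 e_2 v = e_2 e_3 v - e_5 v,
   and the three terms cancel. *)
From HB Require Import structures.
From mathcomp Require Import all_boot all_order all_algebra.
Set Implicit Arguments. Unset Strict Implicit. Unset Printing Implicit Defensive.
Import Order.TTheory GRing.Theory Num.Theory.
Local Open Scope ring_scope.

Section VirasoroRelations.
Variables (k : fieldType) (M : lmodType k) (e : int -> M -> M) (c : M -> M).
Hypothesis hvir : vir_module e c.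

Lemma vir_act0 (i : int) : e i 0 = 0.
Proof.
case: hvir => hlin _ _ _.
have := hlin i 1 0 0; rewrite !scale1r addr0 => h.
by apply: (addrI (e i 0)); rewrite addr0 -h.
Qed.

Lemma vir_actZ (i : int) (a : k) (x : M) : e i (a *: x) = a *: e i x.
Proof. by case: hvir => hlin _ _ _; rewrite -[a *: x]addr0 hlin vir_act0 addr0. Qed.

Lemma vir_actC (i j : int) (x : M) : i != - j ->
  e i (e j x) = e j (e i x) + (j - i)%:~R *: e (i + j) x.
Proof.
case: hvir => _ _ _ hcom hij.
by have := hcom i j x; rewrite (negbTE hij) addr0 => <-; rewrite addrC subrK.
Qed.

Lemma vir_act_annihilated (i j : int) (v : M) : e i v = 0 -> i != - j ->
  e i (e j v) = (j - i)%:~R *: e (i + j) v.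
Proof. by move=> hiv hij; rewrite vir_actC // hiv vir_act0 add0r. Qed.

End VirasoroRelations.

Theorem lemma2 (k : closedFieldType) (hchar : [pchar k] =i pred0)
  (M : lmodType k) (e : int -> M -> M) (c : M -> M)
  (hW : weight_module e c) (hS : simple_module e c) (mu : k)
  (hfin : fin_dim (weight_space e mu))
  (hinf : forall i : int, i != 0 -> ~ fin_dim (weight_space e (mu + i%:~R)))
  (v : M) (hv0 : v != 0) (hv : weight_space e (mu - 1) v) (he1 : e 1 v = 0) :
  let w := e 2 v in
  e 1 (e 1 (e 1 w)) - 6%:R *: e 2 (e 1 w) + 6%:R *: e 3 w = 0.
Proof.
move=> w; have [hvir _] := hW.
have e12 : e 1 (e 2 v) = e 3 v by rewrite (vir_act_annihilated hvir) // scale1r.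
have e13 : e 1 (e 3 v) = 2%:R *: e 4 v by rewrite (vir_act_annihilated hvir).
have e14 : e 1 (e 4 v) = 3%:R *: e 5 v by rewrite (vir_act_annihilated hvir).
have e32 : e 3 (e 2 v) = e 2 (e 3 v) - e 5 v.
  by rewrite (vir_actC hvir) // -scaleN1r.
rewrite /w e12 e13 (vir_actZ hvir) e14 scalerA e32.
by rewrite scalerBr !addrA subrK -natrM subrr.
Qed.
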